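(* Consider a network (as in the context) operated under a $w$-WMW policy, and let $C$ be its sensitivity constant, i.e., a constant such that for every arrival function $A$, every corresponding queue process $Q$, every $\lambda\succeq0$ and every fluid solution $q$ for $\lambda$ with $q(0)=Q(0)$, one has $\|Q(k)-q(k)\|_2\le C(1+\|\lambda\|+\max_{t<k}\|\sum_{\tau=0}^t(A(\tau)-\lambda)\|_2)$ for all $k\in\mathbb{Z}_+$. Fix an arrival function $A:\mathbb{Z}_+\to\mathbb{R}_+^n$ and $q_0\in\mathbb{R}_+^n$. For $r>0$ let $Q^r(\cdot)$ be the queue length process driven by $A(\cdot)$ with $Q^r(0)=rq_0$, and let $\hat q^r(t)=Q^r(\lfloor rt\rfloor)/r$ for $t\ge0$. Let $q(\cdot)$ be a fluid solution for some $\lambda\in\mathbb{R}_+^n$ with $q(0)=q_0$. Then for any $T>0$, $$\sup_{t\le T}\|\hat q^r(t)-q(t)\|_2\le \frac{C}{r}\max_{t<rT}\Big\|\sum_{\tau=0}^t\big(A(\tau)-\lambda\big)\Big\|_2+O(1/r),$$ where $O(1/r)$ denotes a term bounded by $K/r$ for a constant $K$ not depending on $r$.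
   Context: A network consists of $n$ queues, a routing matrix $R\in\mathbb{R}^{n\times n}$ with nonnegative entries, and a finite set $\mathcal{S}\subset\mathbb{R}_+^n$ of service vectors; standing assumption: for every $\mu\in\mathcal{S}$ and every $i$, the vector obtained from $\mu$ by setting its $i$-th entry to zero belongs to $\mathcal{S}$. A queue length process driven by $A:\mathbb{Z}_+\to\mathbb{R}_+^n$ evolves by $Q(t+1)=Q(t)+A(t)+(R-I)\min(\mu(t),Q(t))$ (componentwise min), where $\mu(t)\in\mathcal{S}$ is the chosen service vector. For $w\in\mathbb{R}_{++}^n$, $W=\mathrm{diag}(w)$, $\mathcal{S}_w(x)=\arg\max_{\mu\in\mathcal{S}}x^TW(I-R)\mu$; the $w$-WMW policy chooses $\mu(t)\in\mathcal{S}_w(Q(t))$ arbitrarily. A fluid solution for $\lambda\in\mathbb{R}_+^n$ (weights $w$) is an absolutely continuous $q:\mathbb{R}_+\to\mathbb{R}_+^n$ for which there exist $s_\mu:\mathbb{R}_+\to[0,1]$ ($\mu\in\mathcal{S}$) and $y:\mathbb{R}_+\to\mathbb{R}_+^n$ with, for a.e. $t$: $\dot q(t)=\lambda+(R-I)(\sum_\mu s_\mu(t)\mu-y(t))$, $\sum_\mu s_\mu(t)=1$, $y_i(t)\le\sum_\mu s_\mu(t)\mu_i$, $q_i(t)>0\Rightarrow y_i(t)=0$, and $\mu\notin\mathcal{S}_w(q(t))\Rightarrow s_\mu(t)=0$. *)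

From HB Require Import structures.
From mathcomp Require Import all_boot all_order all_algebra.
From mathcomp Require Import all_classical all_reals all_analysis.
Set Implicit Arguments. Unset Strict Implicit. Unset Printing Implicit Defensive.
Import Order.TTheory GRing.Theory Num.Theory.
Import numFieldNormedType.Exports.
Local Open Scope ring_scope.

Section Network.
Variables (R : realType) (n : nat).

Definition norm2 (v : 'cV[R]_n) : R := Num.sqrt (\sum_i v i 0 ^+ 2).

Definition nonneg (v : 'cV[R]_n) : Prop := forall i, 0 <= v i 0.
Definition minv (u v : 'cV[R]_n) : 'cV[R]_n := \col_i Num.min (u i 0) (v i 0).
Definition zero_at (mu : 'cV[R]_n) (i : 'I_n) : 'cV[R]_n :=
  \col_j (if j == i then 0 else mu j 0).

(* A network: routing matrix Rm >= 0 entrywise, finite set S of service vectors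
   (a duplicate-free list) contained in R_+^n and closed under zeroing entries. *)
Definition network (Rm : 'M[R]_n) (S : seq 'cV[R]_n) : Prop :=
  [/\ forall i j, 0 <= Rm i j,
      uniq S,
      forall mu, mu \in S -> nonneg mu &
      forall mu i, mu \in S -> zero_at mu i \in S].

Definition wscore (Rm : 'M[R]_n) (w x mu : 'cV[R]_n) : R :=
  (x^T *m diag_mx w^T *m (1%:M - Rm) *m mu) 0 0.

Definition in_Sw (Rm : 'M[R]_n) (S : seq 'cV[R]_n) (w x mu : 'cV[R]_n) : Prop :=
  mu \in S /\ forall nu, nu \in S -> wscore Rm w x nu <= wscore Rm w x mu.

Definition wmw_process (Rm : 'M[R]_n) (S : seq 'cV[R]_n) (w : 'cV[R]_n)
    (A Q : nat -> 'cV[R]_n) : Prop :=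
  nonneg (Q 0%N) /\
  exists mu : nat -> 'cV[R]_n, forall t : nat,
    in_Sw Rm S w (Q t) (mu t) /\
    Q t.+1 = Q t + A t + (Rm - 1%:M) *m minv (mu t) (Q t).

Definition abs_cont_on (f : R -> 'cV[R]_n) (a b : R) : Prop :=
  forall e : R, 0 < e -> exists2 d : R, 0 < d &
    forall (m : nat) (u v : nat -> R),
      (forall k, (k < m)%N -> a <= u k /\ u k <= v k /\ v k <= b) ->
      (forall k, (k.+1 < m)%N -> v k <= u k.+1) ->
      \sum_(k < m) (v k - u k) < d ->
      \sum_(k < m) norm2 (f (v k) - f (u k)) < e.

Definition abs_cont_Rplus (f : R -> 'cV[R]_n) : Prop :=
  forall b : R, 0 <= b -> abs_cont_on f 0 b.

(* Fluid solution for lambda (weights w).  Only the values of q on [0, +oo)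
   matter; the derivative condition is required at almost every t >= 0
   (w.r.t. Lebesgue measure), componentwise. *)
Definition fluid_solution (Rm : 'M[R]_n) (S : seq 'cV[R]_n) (w lam : 'cV[R]_n)
    (q : R -> 'cV[R]_n) : Prop :=
  abs_cont_Rplus q /\ (forall t, 0 <= t -> nonneg (q t)) /\
  exists (s : 'cV[R]_n -> R -> R) (y : R -> 'cV[R]_n),
    (forall mu t, 0 <= t -> 0 <= s mu t <= 1) /\
    (forall t, 0 <= t -> nonneg (y t)) /\
    {ae (@lebesgue_measure R), forall t : R, 0 <= t ->
       [/\ forall i : 'I_n,
             is_derive t (1 : R) (fun u => q u i 0)
               ((lam + (Rm - 1%:M) *m (\sum_(mu <- S) s mu t *: mu - y t)) i 0),
           \sum_(mu <- S) s mu t = 1,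
           forall i : 'I_n, y t i 0 <= (\sum_(mu <- S) s mu t *: mu) i 0,
           forall i : 'I_n, 0 < q t i 0 -> y t i 0 = 0 &
           forall mu, mu \in S -> ~ in_Sw Rm S w (q t) mu -> s mu t = 0]}.

(* max_{0 <= t < k} || sum_{tau=0}^t (A tau - lam) ||_2   (0 if k = 0) *)
Definition maxdev (A : nat -> 'cV[R]_n) (lam : 'cV[R]_n) (k : nat) : R :=
  \big[Num.max/0]_(t < k) norm2 (\sum_(tau < t.+1) (A tau - lam)).

Definition sensitivity_constant (Rm : 'M[R]_n) (S : seq 'cV[R]_n) (w : 'cV[R]_n)
    (C : R) : Prop :=
  forall (A Q : nat -> 'cV[R]_n) (lam : 'cV[R]_n) (q : R -> 'cV[R]_n),
    (forall t, nonneg (A t)) -> wmw_process Rm S w A Q ->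
    nonneg lam -> fluid_solution Rm S w lam q -> q 0 = Q 0%N ->
    forall k : nat,
      norm2 (Q k - q k%:R) <= C * (1 + norm2 lam + maxdev A lam k).

End Network.

From HB Require Import structures.
From mathcomp Require Import all_boot all_order all_algebra.
From mathcomp Require Import all_classical all_reals all_analysis.
From mathcomp Require Import measurable_realfun ring lra.
Set Implicit Arguments. Unset Strict Implicit. Unset Printing Implicit Defensive.
Import Order.TTheory GRing.Theory Num.Theory.
Local Open Scope ring_scope.

(* Fluid solutions are invariant under the dilation q |-> r q(. / r), so the
   sensitivity bound compares Q^r(k) / r with q(k / r) at the grid points k / r,
   with error C / r (1 + |lam| + maxdev).  It remains to compare q(k / r) with
   q(t) for t in [k / r, (k + 1) / r), and for this q is Lipschitz: applied to
   the constant arrivals lam (zero deviation), the sensitivity bound keeps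
   every dilated fluid solution within O(1/r) of a queue process whose jumps
   are at most |lam| + jump_bound, and absolute continuity bridges the gaps
   of the grid as r grows. *)

Section EuclideanNorm.
Context {R : realType} {n : nat}.
Implicit Types u v : 'cV[R]_n.

Lemma norm2_ge0 v : 0 <= norm2 v.
Proof. exact: sqrtr_ge0. Qed.

Lemma norm2_0 : norm2 (0 : 'cV[R]_n) = 0.
Proof. by rewrite /norm2 big1 ?sqrtr0 // => i _; rewrite mxE expr0n. Qed.

Lemma norm2N v : norm2 (- v) = norm2 v.
Proof. by congr Num.sqrt; apply: eq_bigr => i _; rewrite mxE sqrrN. Qed.

Lemma norm2_sub_sym u v : norm2 (u - v) = norm2 (v - u).
Proof. by rewrite -norm2N opprB. Qed.

Lemma norm2Z (c : R) v : 0 <= c -> norm2 (c *: v) = c * norm2 v.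
Proof.
move=> c0; rewrite /norm2.
have -> : \sum_i (c *: v) i 0 ^+ 2 = c ^+ 2 * \sum_i v i 0 ^+ 2.
  by rewrite mulr_sumr; apply: eq_bigr => i _; rewrite mxE exprMn.
by rewrite sqrtrM ?sqr_ge0 // sqrtr_sqr ger0_norm.
Qed.

Lemma sum_sqr_ge0 v : 0 <= \sum_i v i 0 ^+ 2.
Proof. by apply: sumr_ge0 => i _; exact: sqr_ge0. Qed.

Lemma norm2_sqr v : norm2 v ^+ 2 = \sum_i v i 0 ^+ 2.
Proof. exact/sqr_sqrtr/sum_sqr_ge0. Qed.

Lemma cauchy_schwarz u v : \sum_i u i 0 * v i 0 <= norm2 u * norm2 v.
Proof.
set b := \sum_i u i 0 * v i 0.
have [b_le0|b_gt0] := lerP b 0.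
  by apply: le_trans b_le0 _; rewrite mulr_ge0 ?norm2_ge0.
have quad x : 0 <= x ^+ 2 * norm2 u ^+ 2 + 2 * x * b + norm2 v ^+ 2.
  suff -> : x ^+ 2 * norm2 u ^+ 2 + 2 * x * b + norm2 v ^+ 2
            = \sum_i (x * u i 0 + v i 0) ^+ 2.
    by apply: sumr_ge0 => i _; exact: sqr_ge0.
  rewrite !norm2_sqr /b !mulr_sumr -!big_split /=.
  by apply: eq_bigr => i _; ring.
rewrite -(ger0_norm (ltW b_gt0)) -sqrtr_sqr /norm2 -sqrtrM ?sum_sqr_ge0 //.
rewrite ler_sqrt ?mulr_ge0 ?sum_sqr_ge0 // -!norm2_sqr.
have [u0|u_neq0] := eqVneq (norm2 u) 0.
  have := quad (- (norm2 v ^+ 2 + 1) / (2 * b)); rewrite u0.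
  have -> : 2 * (- (norm2 v ^+ 2 + 1) / (2 * b)) * b = - (norm2 v ^+ 2 + 1).
    by field; rewrite gt_eqF.
  lra.
have u_gt0 : 0 < norm2 u ^+ 2 by rewrite exprn_gt0 // lt_def u_neq0 norm2_ge0.
have := quad (- b / norm2 u ^+ 2).
have -> : (- b / norm2 u ^+ 2) ^+ 2 * norm2 u ^+ 2 + 2 * (- b / norm2 u ^+ 2) * b
          + norm2 v ^+ 2 = norm2 v ^+ 2 - b ^+ 2 / norm2 u ^+ 2.
  by field.
by rewrite subr_ge0 ler_pdivrMr // mulrC.
Qed.

Lemma ler_norm2D u v : norm2 (u + v) <= norm2 u + norm2 v.
Proof.
have cs := cauchy_schwarz u v.
rewrite -(ger0_norm (addr_ge0 (norm2_ge0 u) (norm2_ge0 v))) -sqrtr_sqr.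
rewrite ler_sqrt ?sqr_ge0 // sqrrD !norm2_sqr.
have -> : \sum_i (u + v) i 0 ^+ 2
          = \sum_i u i 0 ^+ 2 + 2 * \sum_i u i 0 * v i 0 + \sum_i v i 0 ^+ 2.
  by rewrite mulr_sumr -!big_split /=; apply: eq_bigr => i _; rewrite mxE; ring.
rewrite -!norm2_sqr -mulr_natl; lra.
Qed.

Lemma ler_norm2B_trans u v w : norm2 (u - w) <= norm2 (u - v) + norm2 (v - w).
Proof. by apply: le_trans (ler_norm2D _ _); rewrite addrA subrK. Qed.

Lemma norm2_le_sum_abs v : norm2 v <= \sum_i `|v i 0|.
Proof.
have s_ge0 : 0 <= \sum_i `|v i 0| by apply: sumr_ge0 => i _; exact: normr_ge0.
rewrite /norm2 -(ger0_norm s_ge0) -sqrtr_sqr ler_sqrt ?sqr_ge0 //.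
rewrite expr2 mulr_suml; apply: ler_sum => i _.
rewrite -real_normK ?num_real // expr2; apply: ler_wpM2l => //.
by rewrite (bigD1 i) //= lerDl; apply: sumr_ge0 => j _; exact: normr_ge0.
Qed.

End EuclideanNorm.

Section LebesgueDilation.
Context {R : realType}.
Local Notation mu := (@lebesgue_measure R).
Local Open Scope classical_set_scope.

Lemma lebesgue_measure_dilation (c : R) (A : set R) : 0 < c -> measurable A ->
  mu A = (c%:E * mu ((fun x : R => (x * c)%R) @^-1` A))%E.
Proof.
move=> c_gt0 mA.
unshelve epose (img := pushforward mu ((fun x : R => x * c) : R -> measurableTypeR R)
  : {measure set (measurableTypeR R) -> \bar R}); first exact: mulrr_measurable.
pose dilated := mscale (NngNum (ltW c_gt0)) img.
suff -> : mu A = dilated A by [].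
apply: lebesgue_measure_unique mA => _ [[a b] _ <-].
rewrite /dilated /img /mscale /pushforward /=.
change (mu `]a, b] = c%:E * mu ((fun x => (x * c)%R) @^-1` `]a, b]))%E.
have -> : (fun x => x * c) @^-1` `]a, b]%classic = `](a / c), (b / c)]%classic.
  by apply/seteqP; split => x /=; rewrite !in_itv /= ltr_pdivrMr // ler_pdivlMr.
rewrite !lebesgue_measure_itv /= !lte_fin.
rewrite ltr_pM2r ?invr_gt0 //; case: ifP => _; last by rewrite mule0.
by rewrite -EFinD -EFinM -mulrBl mulrCA mulfV ?gt_eqF ?mulr1.
Qed.

Lemma ae_dilate (c : R) (P : R -> Prop) : 0 < c ->
  {ae mu, forall t, P t} -> {ae mu, forall t, P (t * c)}.
Proof.
move=> c_gt0 [N [mN N0 PN]].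
have mpre : measurable ((fun x => x * c) @^-1` N).
  by rewrite -[X in measurable X]setTI; exact: mulrr_measurable.
exists ((fun x => x * c) @^-1` N); split => //; last by move=> x /PN.
move: N0; rewrite (lebesgue_measure_dilation c_gt0 mN) => /eqP.
by rewrite mule_eq0 eqe gt_eqF //= => /eqP.
Qed.

End LebesgueDilation.

Lemma is_derive_dilate {R : realType} (f : R -> R) (r t D : R) : 0 < r ->
  is_derive (t / r) 1 f D -> is_derive t 1 (fun u => r * f (u / r)) D.
Proof.
move=> r_gt0 fD.
have idD : is_derive t (1 : R) (fun u : R => r^-1 *: u) r^-1.
  by rewrite -[X in is_derive _ _ _ X]mulr1; exact: is_deriveZ.
have compD : is_derive t 1 (f \o (fun u => r^-1 *: u)) (D / r).
  by apply: (is_derive1_comp _ idD); move: fD; rewrite mulrC.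
have rD : r *: (D / r) = D.
  by change (r * (D / r) = D); rewrite mulrCA mulfV ?gt_eqF ?mulr1.
suff -> : (fun u => r * f (u / r)) = r \*: (f \o (fun u => r^-1 *: u)).
  by rewrite -rD; exact: is_deriveZ.
by apply/funext => u; rewrite [u / r]mulrC.
Qed.

Lemma abs_cont_Rplus_dilate {R : realType} {n : nat} (f : R -> 'cV[R]_n) (r : R) :
  0 < r -> abs_cont_Rplus f -> abs_cont_Rplus (fun u => r *: f (u / r)).
Proof.
move=> r_gt0 fac b b_ge0 e e_gt0.
have [d d_gt0 fd] :=
  fac (b / r) (divr_ge0 b_ge0 (ltW r_gt0)) (e / r) (divr_gt0 e_gt0 r_gt0).
exists (d * r); first exact: mulr_gt0.
move=> m u v uv_itv vu_sorted uv_len.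
have ler_div x z : (x / r <= z / r) = (x <= z) by rewrite ler_pM2r ?invr_gt0.
have fsum : \sum_(k < m) norm2 (f (v k / r) - f (u k / r)) < e / r.
  apply: (fd m (fun k => u k / r) (fun k => v k / r)).
  - move=> k km; have [ub [uv vb]] := uv_itv k km.
    by rewrite !ler_div uv vb divr_ge0 // ltW.
  - by move=> k km; rewrite ler_div; apply: vu_sorted.
  - rewrite -(ltr_pM2r r_gt0) mulr_suml.
    by under eq_bigr do rewrite -mulrBl mulfVK ?gt_eqF //.
under eq_bigr do rewrite -scalerBr norm2Z ?(ltW r_gt0) //.
by rewrite -mulr_sumr -ltr_pdivlMl // mulrC.
Qed.

Section FluidDilation.
Context {R : realType} {n : nat} (Rm : 'M[R]_n) (S : seq 'cV[R]_n) (w : 'cV[R]_n).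

Lemma wscoreZ (c : R) x mu : wscore Rm w (c *: x) mu = c * wscore Rm w x mu.
Proof. by rewrite /wscore linearZ /= -!scalemxAl mxE. Qed.

Lemma in_SwZ (c : R) x mu : 0 < c -> in_Sw Rm S w x mu -> in_Sw Rm S w (c *: x) mu.
Proof.
by move=> c_gt0 [muS mu_max]; split=> // nu /mu_max; rewrite !wscoreZ ler_pM2l.
Qed.

Lemma fluid_solution_dilate lam q (r : R) : 0 < r -> fluid_solution Rm S w lam q ->
  fluid_solution Rm S w lam (fun u => r *: q (u / r)).
Proof.
move=> r_gt0 [qac [q_ge0 [s [y [s_itv [y_ge0 q_ae]]]]]].
have div_ge0 t : 0 <= t -> 0 <= t / r by move=> t_ge0; rewrite divr_ge0 // ltW.
split; [exact: abs_cont_Rplus_dilate | split].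
  by move=> t /div_ge0/q_ge0 qt i; rewrite mxE mulr_ge0 // ltW.
exists (fun mu t => s mu (t / r)), (fun t => y (t / r)); split; [|split].
- by move=> mu t /div_ge0; apply: s_itv.
- by move=> t /div_ge0; apply: y_ge0.
have rV_gt0 : 0 < r^-1 by rewrite invr_gt0.
have := ae_dilate rV_gt0 q_ae.
apply: (filterS (Filter := ae_filter_ringOfSetsType _)) => t qt /div_ge0/qt.
move=> [q_deriv s_sum1 y_le q_pos s_opt]; split => //.
- move=> i; under eq_fun do rewrite mxE; exact: is_derive_dilate.
- by move=> i; rewrite mxE pmulr_rgt0 //; apply: q_pos.
- by move=> mu muS mu_nopt; apply: s_opt => // /(in_SwZ r_gt0).
Qed.

End FluidDilation.

Lemma norm2_telescope {R : realType} {n : nat} (u : nat -> 'cV[R]_n) (B : R) :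
  (forall t, norm2 (u t.+1 - u t) <= B) ->
  forall k m, (k <= m)%N -> norm2 (u m - u k) <= B * (m - k)%:R.
Proof.
move=> u_jump k m km; move: (m - k)%N (subnKC km) => d <-.
elim: d => [|d IHd]; first by rewrite addn0 subrr mulr0 norm2_0.
apply: le_trans (ler_norm2B_trans _ (u (k + d)%N) _) _.
by rewrite addnS -natr1 mulrDr mulr1 addrC lerD.
Qed.

Lemma exists_argmax_seq {T : eqType} {R : realDomainType} (f : T -> R) (s : seq T) :
  s != [::] -> exists2 x, x \in s & forall y, y \in s -> f y <= f x.
Proof.
elim: s => [//|a [|b s] IH] _.
  by exists a => [|y]; rewrite ?mem_head // inE => /eqP ->.
have [x xs x_max] := IH isT.
have [fa_le|fx_lt] := lerP (f a) (f x).
  exists x => [|y]; first by rewrite inE xs orbT.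
  by rewrite inE => /predU1P[->|/x_max].
exists a => [|y]; first exact: mem_head.
by rewrite inE => /predU1P[->//|/x_max fy]; apply: le_trans fy (ltW fx_lt).
Qed.

Section WMWProcess.
Context {R : realType} {n : nat} (Rm : 'M[R]_n) (S : seq 'cV[R]_n) (w : 'cV[R]_n).

Lemma wmw_process_exists (A : nat -> 'cV[R]_n) (Q0 : 'cV[R]_n) :
  S != [::] -> nonneg Q0 -> exists Q, wmw_process Rm S w A Q /\ Q 0%N = Q0.
Proof.
move=> S_neq0 Q0_ge0.
have /choice[pick pickP] : forall x, exists mu, in_Sw Rm S w x mu.
  move=> x; have [mu muS mu_max] := exists_argmax_seq (wscore Rm w x) S_neq0.
  by exists mu.
pose fix Q t := if t is t'.+1
  then Q t' + A t' + (Rm - 1%:M) *m minv (pick (Q t')) (Q t') else Q0.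
by exists Q; split => //; split => //; exists (fun t => pick (Q t)).
Qed.

Hypothesis net : network Rm S.

Definition service_bound : R := \sum_(nu <- S) \sum_j nu j 0.

Definition jump_bound : R := service_bound * \sum_i (\sum_j Rm i j + 1).

Lemma service_le_bound mu j : mu \in S -> mu j 0 <= service_bound.
Proof.
have [_ S_uniq S_ge0 _] := net; move=> muS.
rewrite /service_bound (bigD1_seq mu) //=.
apply: le_trans (_ : \sum_(k < n) mu k 0 <= _).
  by rewrite (bigD1 j) //= lerDl sumr_ge0 // => k _; exact: S_ge0.
rewrite lerDl big_seq_cond sumr_ge0 // => nu /andP[nuS _].
by apply: sumr_ge0 => k _; exact: S_ge0.
Qed.

Lemma jump_bound_ge0 : 0 <= jump_bound.
Proof.
have [R_ge0 _ S_ge0 _] := net.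
have bound_ge0 : 0 <= service_bound.
  rewrite /service_bound big_seq sumr_ge0 // => nu nuS.
  by apply: sumr_ge0 => j _; exact: S_ge0.
rewrite mulr_ge0 // sumr_ge0 // => i _.
by rewrite addr_ge0 // sumr_ge0.
Qed.

Lemma minv_bounds (mu Q : 'cV[R]_n) i : 0 <= mu i 0 -> 0 <= Q i 0 ->
  [/\ 0 <= minv mu Q i 0, minv mu Q i 0 <= mu i 0 & minv mu Q i 0 <= Q i 0].
Proof. by move=> mu_ge0 Q_ge0; rewrite mxE le_min !ge_min !lexx orbT mu_ge0. Qed.

Lemma norm2_routing_le (m mu : 'cV[R]_n) : mu \in S ->
  (forall j, 0 <= m j 0 <= mu j 0) -> norm2 ((Rm - 1%:M) *m m) <= jump_bound.
Proof.
have [R_ge0 _ _ _] := net; move=> muS m_itv.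
have m_le_bound j : m j 0 <= service_bound.
  by have /andP[_ m_le] := m_itv j; apply: le_trans m_le (service_le_bound _ muS).
apply: le_trans (norm2_le_sum_abs _) _; rewrite /jump_bound mulr_sumr.
apply: ler_sum => i _; rewrite mulmxBl mul1mx !mxE mulrDr mulr1 mulr_sumr.
apply: le_trans (ler_normB _ _) _; apply: lerD.
  rewrite ger0_norm; last first.
    by apply: sumr_ge0 => j _; case/andP: (m_itv j) => *; rewrite mulr_ge0.
  by apply: ler_sum => j _; rewrite [leRHS]mulrC; exact: ler_wpM2l.
by case/andP: (m_itv i) => m_ge0 _; rewrite ger0_norm.
Qed.

Variables (A Q : nat -> 'cV[R]_n).
Hypotheses (A_ge0 : forall t, nonneg (A t)) (Q_wmw : wmw_process Rm S w A Q).

Lemma wmw_process_nonneg t : nonneg (Q t).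
Proof.
have [R_ge0 _ S_ge0 _] := net; have [Q0_ge0 [mu Q_step]] := Q_wmw.
elim: t => [//|t IHt] i; have [[muS _] ->] := Q_step t.
have m_bounds j := minv_bounds (S_ge0 _ muS j) (IHt j).
move: (minv (mu t) (Q t)) m_bounds => m m_bounds.
have routed_ge0 : 0 <= \sum_j Rm i j * m j 0.
  by apply: sumr_ge0 => j _; case: (m_bounds j) => *; rewrite mulr_ge0.
have [_ _ m_le] := m_bounds i; have := A_ge0 t i.
rewrite mulmxBl mul1mx !mxE; lra.
Qed.

Lemma wmw_jump_le t : norm2 (Q t.+1 - Q t) <= norm2 (A t) + jump_bound.
Proof.
have [_ _ S_ge0 _] := net; have [_ [mu Q_step]] := Q_wmw.
have [[muS _] ->] := Q_step t; rewrite [_ - Q t]addrC !addrA addNr add0r.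
apply: le_trans (ler_norm2D _ _) _; rewrite lerD2l.
apply: (norm2_routing_le muS) => j.
by have [-> m_le _] := minv_bounds (S_ge0 _ muS j) (wmw_process_nonneg t j).
Qed.

End WMWProcess.

Lemma truncn_grid_itv {R : realType} (r x : R) : 0 < r -> 0 <= x ->
  (Num.truncn (r * x))%:R / r <= x < (Num.truncn (r * x))%:R / r + r^-1.
Proof.
move=> r_gt0 x_ge0; have /andP[k_le k_gt] := truncn_itv (mulr_ge0 (ltW r_gt0) x_ge0).
rewrite -natr1 in k_gt.
have -> : (Num.truncn (r * x))%:R / r + r^-1 = ((Num.truncn (r * x))%:R + 1) / r.
  by rewrite mulrDl mul1r.
by rewrite ler_pdivrMr // ltr_pdivlMr // ![x * r]mulrC k_le k_gt.
Qed.

Lemma truncn_le_ceil {R : realType} (x y : R) : 0 <= y -> x <= y ->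
  (Num.truncn x <= `|Num.ceil y|)%N.
Proof.
move=> y_ge0 xy; rewrite truncn_le_nat -natr1 natr_absz ger0_norm ?ceil_ge0; last first.
  by apply: lt_le_trans y_ge0; rewrite ltrN10.
by apply: le_lt_trans xy _; apply: le_lt_trans (ceil_ge y) _; rewrite ltrDl.
Qed.

Lemma lipschitz_of_grid {R : realType} {n : nat} (f : R -> 'cV[R]_n) (L D : R) :
  0 <= L -> 0 <= D -> abs_cont_Rplus f ->
  (forall (r : R) (k m : nat), 0 < r -> (k <= m)%N ->
     norm2 (f (m%:R / r) - f (k%:R / r)) <= (L * (m - k)%:R + D) / r) ->
  forall a b, 0 <= a -> a <= b -> norm2 (f b - f a) <= L * (b - a).
Proof.
move=> L_ge0 D_ge0 f_ac f_grid a b a_ge0 ab; apply/ler_addgt0Pr => e e_gt0.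
have b_ge0 : 0 <= b := le_trans a_ge0 ab.
pose eps := e / 3; have eps_gt0 : 0 < eps by rewrite divr_gt0.
have [d d_gt0 f_d] := f_ac (b + 1) (addr_ge0 b_ge0 ler01) eps eps_gt0.
have f_cont x z : 0 <= x -> x <= z -> z <= b + 1 -> z - x < d ->
    norm2 (f z - f x) < eps.
  by move=> *; have := f_d 1%N (fun=> x) (fun=> z); rewrite !big_ord1; apply.
(* [r] makes the mesh [1 / r] smaller than [d] and [(L + D) / r <= eps]. *)
pose r := (L + D) / eps + d^-1 + 1.
have LDeps_ge0 : 0 <= (L + D) / eps by rewrite divr_ge0 ?addr_ge0 // ltW.
have dV_gt0 : 0 < d^-1 by rewrite invr_gt0.
have r_gt0 : 0 < r by rewrite /r; lra.
have rV_lt : r^-1 < d by rewrite invf_plt ?posrE //; rewrite /r; lra.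
have LD_le : (L + D) / r <= eps.
  rewrite ler_pdivrMr // /r !mulrDr mulrCA mulfV ?gt_eqF // mulr1.
  have : 0 <= eps * d^-1 by rewrite mulr_ge0 // ltW.
  lra.
set ka := Num.truncn (r * a); set kb := Num.truncn (r * b).
have /andP[Xa aX] := truncn_grid_itv r_gt0 a_ge0.
have /andP[Yb bY] := truncn_grid_itv r_gt0 b_ge0.
have kab : (ka <= kb)%N by apply: le_truncn; rewrite ler_pM2l.
have X_ge0 : 0 <= ka%:R / r by rewrite divr_ge0 // ltW.
have Y_ge0 : 0 <= kb%:R / r by rewrite divr_ge0 // ltW.
have fa : norm2 (f (ka%:R / r) - f a) < eps.
  by rewrite norm2_sub_sym; apply: f_cont; lra.
have fb : norm2 (f b - f (kb%:R / r)) < eps by apply: f_cont; lra.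
have fab := f_grid r ka kb r_gt0 kab.
have mesh : (L * (kb - ka)%:R + D) / r <= L * (b - a) + eps.
  have : L * (kb%:R / r) - L * (ka%:R / r) <= L * (b - a) + L / r.
    by rewrite -mulrBr -mulrDr ler_wpM2l //; lra.
  rewrite natrB //; lra.
have := ler_norm2B_trans (f b) (f (kb%:R / r)) (f a).
have := ler_norm2B_trans (f (kb%:R / r)) (f (ka%:R / r)) (f a).
rewrite /eps in fa fb mesh; lra.
Qed.

Section Maxdev.
Context {R : realType} {n : nat} (A : nat -> 'cV[R]_n) (lam : 'cV[R]_n).

Lemma maxdev_le k k' : (k <= k')%N -> maxdev A lam k <= maxdev A lam k'.
Proof.
exact: (le_bigmax_ord predT (fun t => norm2 (\sum_(tau < t.+1) (A tau - lam)))).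
Qed.

Lemma maxdev_const k : maxdev (fun _ => lam) lam k = 0.
Proof.
by apply: bigmax_eq_id => t _; rewrite big1 ?norm2_0 // => tau _; rewrite subrr.
Qed.

End Maxdev.

Section Sensitivity.
Context {R : realType} {n : nat} (Rm : 'M[R]_n) (S : seq 'cV[R]_n) (w : 'cV[R]_n).
Variables (C : R) (lam : 'cV[R]_n) (q : R -> 'cV[R]_n).
Hypotheses (sens : sensitivity_constant Rm S w C) (lam_ge0 : nonneg lam)
  (q_fluid : fluid_solution Rm S w lam q).

Lemma sensitivity_dilated (A Q : nat -> 'cV[R]_n) (r : R) :
  (forall t, nonneg (A t)) -> wmw_process Rm S w A Q -> 0 < r -> Q 0%N = r *: q 0 ->
  forall k : nat, norm2 (r^-1 *: Q k - q (k%:R / r))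
                  <= C / r * (1 + norm2 lam + maxdev A lam k).
Proof.
move=> A_ge0 Q_wmw r_gt0 Q0 k.
have := sens A_ge0 Q_wmw lam_ge0 (fluid_solution_dilate r_gt0 q_fluid).
rewrite /= mul0r -Q0 => /(_ erefl k) bound.
have -> : r^-1 *: Q k - q (k%:R / r) = r^-1 *: (Q k - r *: q (k%:R / r)).
  by rewrite scalerBr scalerA mulVf ?gt_eqF // scale1r.
have rV_gt0 : 0 < r^-1 by rewrite invr_gt0.
by rewrite norm2Z ?(ltW rV_gt0) // -mulrA mulrCA ler_pM2l.
Qed.

Hypothesis S_neq0 : S != [::].

Lemma sensitivity_constant_ge0 : 0 <= C.
Proof.
have [_ [q_ge0 _]] := q_fluid.
have [Q [Q_wmw Q0]] :=
  wmw_process_exists Rm w (fun _ => lam) S_neq0 (q_ge0 0 (lexx 0)).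
have := sens (fun _ => lam_ge0) Q_wmw lam_ge0 q_fluid (esym Q0) 0.
rewrite /maxdev big_ord0 addr0 => bound.
have lam_gt0 : 0 < 1 + norm2 lam by rewrite ltr_pwDl ?norm2_ge0.
rewrite -(pmulr_lge0 _ lam_gt0).
exact: le_trans (norm2_ge0 _) bound.
Qed.

Hypothesis net : network Rm S.

Lemma fluid_grid_le (r : R) (k m : nat) : 0 < r -> (k <= m)%N ->
  norm2 (q (m%:R / r) - q (k%:R / r))
    <= ((norm2 lam + jump_bound Rm S) * (m - k)%:R + 2 * (C * (1 + norm2 lam))) / r.
Proof.
move=> r_gt0 km; have [_ [q_ge0 _]] := q_fluid.
have rq0_ge0 : nonneg (r *: q 0) by move=> i; rewrite mxE mulr_ge0 ?(ltW r_gt0) ?q_ge0.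
have [Q [Q_wmw Q0]] := wmw_process_exists Rm w (fun _ => lam) S_neq0 rq0_ge0.
have close j : norm2 (r^-1 *: Q j - q (j%:R / r)) <= C / r * (1 + norm2 lam).
  have := sensitivity_dilated (fun _ => lam_ge0) Q_wmw r_gt0 Q0 j.
  by rewrite maxdev_const addr0.
have jumps : norm2 (r^-1 *: Q m - r^-1 *: Q k)
             <= (norm2 lam + jump_bound Rm S) * (m - k)%:R / r.
  have rV_ge0 : 0 <= r^-1 by rewrite invr_ge0 ltW.
  rewrite -scalerBr norm2Z // mulrC ler_wpM2r //.
  exact: norm2_telescope (wmw_jump_le net (fun _ => lam_ge0) Q_wmw) _ _ km.
have close_m : norm2 (q (m%:R / r) - r^-1 *: Q m) <= C / r * (1 + norm2 lam).
  by rewrite norm2_sub_sym; exact: close.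
have := ler_norm2B_trans (q (m%:R / r)) (r^-1 *: Q m) (q (k%:R / r)).
have := ler_norm2B_trans (r^-1 *: Q m) (r^-1 *: Q k) (q (k%:R / r)).
have := close k; lra.
Qed.

Lemma fluid_lipschitz a b : 0 <= a -> a <= b ->
  norm2 (q b - q a) <= (norm2 lam + jump_bound Rm S) * (b - a).
Proof.
have [q_ac _] := q_fluid; have C_ge0 := sensitivity_constant_ge0.
apply: (lipschitz_of_grid _ _ q_ac fluid_grid_le).
  by rewrite addr_ge0 ?norm2_ge0 ?jump_bound_ge0.
by rewrite mulr_ge0 // mulr_ge0 // addr_ge0 ?norm2_ge0.
Qed.

End Sensitivity.

Theorem corollary1 (R : realType) (n : nat) (Rm : 'M[R]_n) (S : seq 'cV[R]_n)
    (w : 'cV[R]_n) (C : R) :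
  network Rm S -> (forall i, 0 < w i 0) ->
  sensitivity_constant Rm S w C ->
  forall (A : nat -> 'cV[R]_n) (q0 lam : 'cV[R]_n) (q : R -> 'cV[R]_n),
    (forall t, nonneg (A t)) -> nonneg q0 -> nonneg lam ->
    fluid_solution Rm S w lam q -> q 0 = q0 ->
  forall T : R, 0 < T ->
  exists K : R, forall (r : R) (Qr : nat -> 'cV[R]_n),
    0 < r -> wmw_process Rm S w A Qr -> Qr 0%N = r *: q0 ->
    forall t : R, 0 <= t <= T ->
      norm2 (r^-1 *: Qr (Num.truncn (r * t)) - q t)
        <= C / r * maxdev A lam `|Num.ceil (r * T)|%N + K / r.
Proof.
move=> net _ sens A q0 lam q A_ge0 _ lam_ge0 q_fluid q_0 T T_gt0.
have [S0|S_neq0] := eqVneq S [::].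
  by exists 0 => r Qr _ [_ [mu Q_step]]; have [[]] := Q_step 0%N; rewrite S0.
have C_ge0 := sensitivity_constant_ge0 sens lam_ge0 q_fluid S_neq0.
pose L := norm2 lam + jump_bound Rm S.
exists (C * (1 + norm2 lam) + L) => r Qr r_gt0 Qr_wmw Qr0 t /andP[t_ge0 t_le].
set k := Num.truncn (r * t); set K := `|Num.ceil (r * T)|%N.
have /andP[kt tk] := truncn_grid_itv r_gt0 t_ge0; rewrite -/k in kt tk.
have kK : (k <= K)%N.
  by apply: truncn_le_ceil; rewrite ?ler_pM2l // mulr_ge0 // ltW.
have Qr0' : Qr 0%N = r *: q 0 by rewrite q_0.
have := sensitivity_dilated sens lam_ge0 q_fluid A_ge0 Qr_wmw r_gt0 Qr0' k.
have k_ge0 : 0 <= k%:R / r by rewrite divr_ge0 // ltW.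
have lip : norm2 (q (k%:R / r) - q t) <= L * (t - k%:R / r).
  rewrite norm2_sub_sym.
  exact: (fluid_lipschitz sens lam_ge0 q_fluid S_neq0 net k_ge0 kt).
have := ler_wpM2l (divr_ge0 C_ge0 (ltW r_gt0)) (maxdev_le A lam kK).
have := ler_norm2B_trans (r^-1 *: Qr k) (q (k%:R / r)) (q t).
have : L * (t - k%:R / r) <= L / r.
  rewrite ler_wpM2l ?addr_ge0 ?norm2_ge0 ?jump_bound_ge0 // lerBlDr addrC.
  exact: ltW tk.
lra.
Qed.
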